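(* Let $E$ be a real Banach space and let $\mathcal F\subseteq H[E]_+$ be upwards directed and pointwise bounded. Define $g:E^*\to\mathbb R_+$ by $g(x^* )=\sup\{f(x^* ):f\in\mathcal F\}$. Then $g\in H[E]_+$ and $\|g\|_{FBL[E]}=\sup\{\|f\|_{FBL[E]}:f\in\mathcal F\}$ (both sides possibly infinite).
   Context: For a real Banach space $E$ with dual $E^*$ and closed unit ball $B_E$, let $H[E]$ be the vector space of all positively homogeneous functions $f:E^*\to\mathbb R$ ($f(\lambda x^* )=\lambda f(x^* )$ for $\lambda>0$), ordered pointwise; $H[E]_+$ denotes its nonnegative elements. For $f\in H[E]$ put $\|f\|_{FBL[E]}:=\sup\{\sum_{k=1}^n|f(x_k^* )| : n\in\mathbb N,\ x_1^*,\dots,x_n^*\in E^*,\ \sup_{x\in B_E}\sum_{k=1}^n|x_k^*(x)|\le 1\}\in[0,\infty]$. *)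

From HB Require Import structures.
From mathcomp Require Import all_boot all_order all_algebra.
From mathcomp Require Import all_classical all_reals all_analysis.
Set Implicit Arguments. Unset Strict Implicit. Unset Printing Implicit Defensive.
Import Order.TTheory GRing.Theory Num.Theory.
Import numFieldNormedType.Exports.
Local Open Scope classical_set_scope.
Local Open Scope ring_scope.

Record dual (R : realType) (E : normedModType R) := Dual {
  dfun :> E -> R;
  dfun_linear : forall (a : R) (u v : E), dfun (a *: u + v) = a * dfun u + dfun v;
  dfun_cont : continuous dfun }.

Section DualScale.
Context (R : realType) (E : normedModType R).

Lemma dual_scale_linear (c : R) (x : dual E) (a : R) (u v : E) :
  c * x (a *: u + v) = a * (c * x u) + c * x v.
Proof. by rewrite dfun_linear mulrDr mulrCA. Qed.

Lemma dual_scale_cont (c : R) (x : dual E) : continuous (fun u : E => c * x u).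
Proof. move=> u; apply: cvgM; [exact: cvg_cst | exact: dfun_cont]. Qed.

Definition dual_scale (c : R) (x : dual E) : dual E :=
  @Dual R E (fun u : E => c * x u) (@dual_scale_linear c x) (@dual_scale_cont c x).
End DualScale.

Definition pos_homogeneous (R : realType) (E : normedModType R) (f : dual E -> R) :=
  forall (lam : R) (x : dual E), 0 < lam -> f (dual_scale lam x) = lam * f x.

Definition H_plus (R : realType) (E : normedModType R) : set (dual E -> R) :=
  [set f | pos_homogeneous f /\ forall x, 0 <= f x].

Definition fbl_norm (R : realType) (E : normedModType R) (f : dual E -> R) : \bar R :=
  ereal_sup [set r : \bar R | exists (n : nat) (xs : 'I_n -> dual E),
     (forall x : E, `|x| <= 1 -> \sum_(k < n) `|xs k x| <= 1) /\
     r = ((\sum_(k < n) `|f (xs k)|)%:E)].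

(* upwards directed (a directed family is nonempty), pointwise order *)
Definition fam_upward_directed (R : realType) (E : normedModType R) (F : set (dual E -> R)) :=
  F !=set0 /\
  forall f1 f2, F f1 -> F f2 ->
    exists2 f3, F f3 & forall x, f1 x <= f3 x /\ f2 x <= f3 x.

Definition fam_pointwise_bounded (R : realType) (E : normedModType R) (F : set (dual E -> R)) :=
  forall x : dual E, exists M : R, forall f, F f -> `|f x| <= M.

From HB Require Import structures.
From mathcomp Require Import all_boot all_order all_algebra.
From mathcomp Require Import all_classical all_reals all_analysis.
Set Implicit Arguments. Unset Strict Implicit. Unset Printing Implicit Defensive.
Import Order.TTheory GRing.Theory Num.Theory.
Import numFieldNormedType.Exports.
Local Open Scope classical_set_scope.
Local Open Scope ring_scope.

(* Since the family is upwards directed, the suprema g(x_1), ..., g(x_n) at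
   finitely many functionals are approximated simultaneously by a single
   member f of the family, so every finite sum entering ||g||_FBL is
   approximated by the same sum for some f.  Conversely 0 <= f <= g pointwise
   and the FBL norm is monotone. *)

Section DirectedSupremum.
Variables (R : realType) (T : Type) (F : set (T -> R)).

Definition sup_fun (x : T) : R := sup [set f x | f in F].

Hypotheses (F_neq0 : F !=set0)
  (F_bounded : forall x, has_ubound [set f x | f in F]).

Lemma has_sup_at (x : T) : has_sup [set f x | f in F].
Proof. by case: F_neq0 => f Ff; split; [exists (f x), f|exact: F_bounded]. Qed.

Lemma sup_fun_ub (f : T -> R) (x : T) : F f -> f x <= sup_fun x.
Proof. by move=> Ff; apply: ub_le_sup; [exact: F_bounded | exists f]. Qed.

Lemma sup_fun_ge0 (x : T) : (forall f, F f -> 0 <= f x) -> 0 <= sup_fun x.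
Proof. by case: F_neq0 => f Ff /(_ f Ff) /le_trans; apply; exact: sup_fun_ub. Qed.

Lemma sup_fun_scale (lam : R) (h : T -> T) (x : T) : 0 < lam ->
  (forall f, F f -> f (h x) = lam * f x) -> sup_fun (h x) = lam * sup_fun x.
Proof.
move=> lam_gt0 fh; apply/le_anti/andP; split.
  apply: ge_sup => [|_ [f Ff <-]]; first by case: (has_sup_at (h x)).
  by rewrite fh // ler_pM2l //; exact: sup_fun_ub.
rewrite mulrC -ler_pdivlMr //.
apply: ge_sup => [|_ [f Ff <-]]; first by case: (has_sup_at x).
by rewrite ler_pdivlMr // mulrC -fh //; exact: sup_fun_ub.
Qed.

Hypothesis F_directed : forall f1 f2, F f1 -> F f2 ->
  exists2 f3, F f3 & forall x, f1 x <= f3 x /\ f2 x <= f3 x.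

Lemma sup_fun_approx (eps : R) n (xs : 'I_n -> T) : 0 < eps ->
  exists2 f, F f & forall k, sup_fun (xs k) - eps < f (xs k).
Proof.
move=> eps_gt0; elim: n xs => [|n IHn] xs.
  by case: F_neq0 => f Ff; exists f => // -[].
have [f1 Ff1 f1_approx] := IHn (fun k => xs (lift ord0 k)).
have [_ [f2 Ff2 <-] f2_approx] := sup_adherent eps_gt0 (has_sup_at (xs ord0)).
have [f3 Ff3 f3_ge] := F_directed Ff1 Ff2.
exists f3 => // k; case: (unliftP ord0 k) => [j ->|->].
  exact: lt_le_trans (f1_approx j) (f3_ge _).1.
exact: lt_le_trans f2_approx (f3_ge _).2.
Qed.

Lemma sup_fun_sum_approx (eps : R) n (xs : 'I_n -> T) : 0 < eps ->
  exists2 f, F f & \sum_(k < n) sup_fun (xs k) <= \sum_(k < n) f (xs k) + eps.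
Proof.
move=> eps_gt0; have epsn_gt0 : 0 < eps / n.+1%:R by rewrite divr_gt0.
have [f Ff f_approx] := sup_fun_approx xs epsn_gt0.
exists f => //; apply: (le_trans (y := \sum_(k < n) (f (xs k) + eps / n.+1%:R))).
  by apply: ler_sum => k _; rewrite -lerBlDr ltW.
rewrite big_split /= lerD2l sumr_const card_ord.
apply: (le_trans (y := eps / n.+1%:R *+ n.+1)).
  by rewrite [leRHS]mulrSr lerDl ltW.
by rewrite -mulr_natr divfK // pnatr_eq0.
Qed.

End DirectedSupremum.

Lemma pointwise_bounded_has_ubound (R : realType) (E : normedModType R)
    (F : set (dual E -> R)) :
  fam_pointwise_bounded F -> forall x, has_ubound [set f x | f in F].
Proof.
by move=> F_bounded x; have [M HM] := F_bounded x; exists M => _ [f /HM + <-];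
  apply: le_trans (ler_norm _).
Qed.

Section FBLNorm.
Variables (R : realType) (E : normedModType R).

Lemma fbl_norm_ge_sum (f : dual E -> R) n (xs : 'I_n -> dual E) :
  (forall x : E, `|x| <= 1 -> \sum_(k < n) `|xs k x| <= 1) ->
  ((\sum_(k < n) `|f (xs k)|)%:E <= fbl_norm f)%E.
Proof. by move=> xs_adm; apply: ereal_sup_ubound; exists n, xs. Qed.

Lemma le_fbl_norm (f g : dual E -> R) :
  (forall x, `|f x| <= `|g x|) -> (fbl_norm f <= fbl_norm g)%E.
Proof.
move=> fg; apply: ge_ereal_sup => _ [n [xs [xs_adm ->]]].
apply: le_trans (fbl_norm_ge_sum g xs_adm); rewrite lee_fin.
by apply: ler_sum => k _.
Qed.

End FBLNorm.

Theorem lemma4p2 (R : realType) (E : completeNormedModType R)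
  (F : set (dual E -> R)) :
  F `<=` @H_plus R E -> fam_upward_directed F -> fam_pointwise_bounded F ->
  let g := fun x : dual E => sup [set f x | f in F] in
  @H_plus R E g /\ fbl_norm g = ereal_sup [set fbl_norm f | f in F].
Proof.
move=> FH [F_neq0 F_directed] /pointwise_bounded_has_ubound F_bounded g.
have g_ge0 x : 0 <= g x.
  by apply: (sup_fun_ge0 F_neq0 F_bounded) => f /FH[_]; apply.
have f_le_g f x : F f -> `|f x| <= `|g x|.
  by move=> /[dup] Ff /FH[_ f_ge0]; rewrite !ger0_norm //; exact: sup_fun_ub.
split.
  split=> // lam x lam_gt0; apply: (sup_fun_scale F_neq0 F_bounded) => // f.
  by case/FH => f_hom _; exact: f_hom.
apply/le_anti/andP; split; last first.
  by apply: ge_ereal_sup => _ [f Ff <-]; apply: le_fbl_norm => x; exact: f_le_g.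
apply: ge_ereal_sup => _ [n [xs [xs_adm ->]]]; apply/lee_addgt0Pr => e e_gt0.
have [f Ff sum_g_le] := sup_fun_sum_approx F_neq0 F_bounded F_directed xs e_gt0.
have sum_f_le : ((\sum_(k < n) `|f (xs k)|)%:E <= ereal_sup [set fbl_norm f | f in F])%E.
  by apply: le_trans (fbl_norm_ge_sum f xs_adm) _; apply: ereal_sup_ubound; exists f.
apply: le_trans (leeD2r _ sum_f_le); rewrite -EFinD lee_fin.
have sum_norm (h : dual E -> R) : (forall x, 0 <= h x) ->
    \sum_(k < n) `|h (xs k)| = \sum_(k < n) h (xs k).
  by move=> h_ge0; apply: eq_bigr => k _; rewrite ger0_norm.
by rewrite (sum_norm g) // (sum_norm f) //; exact: (FH _ Ff).2.
Qed.
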